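(* Suppose $\{0,1\}^\ell$ admits a code decomposition with chain of parameters $(\ell,k_0,d_0)-(\ell,k_1,d_1)-\dots-(\ell,k_{m-1},d_{m-1})$, and set $k_m=0$. Then there exists a kernel $g$ of dimension $\ell$ with $E(g)\ge\frac1\ell\sum_{j=0}^{m-1}(k_j-k_{j+1})\log_\ell d_j$.
   Context: A code decomposition of $\{0,1\}^\ell$ with chain of parameters $(\ell,k_0,d_0)-(\ell,k_1,d_1)-\dots-(\ell,k_{m-1},d_{m-1})$ (integers $\ell=k_0>k_1>\dots>k_{m-1}\ge0$) is a family of nested partitions: level $0$ consists of the single set $\{0,1\}^\ell$, and for $j=1,\dots,m-1$ each set of level $j-1$ is partitioned into equally sized sets forming level $j$; every set at level $j$ has exactly $2^{k_j}$ elements and minimum Hamming distance at least $d_j$ between distinct elements. A kernel of dimension $\ell$ is a bijection $g:\{0,1\}^\ell\to\{0,1\}^\ell$; ${\bf a}\bullet{\bf b}$ denotes concatenation, $d_H$ Hamming distance; partial distances $D_{min}^{(i)}=\min\{d_H(g({\bf w}\bullet 0\bullet{\bf u}),g({\bf w}\bullet 1\bullet {\bf v})) : {\bf w}\in\{0,1\}^i,\ {\bf u},{\bf v}\in\{0,1\}^{\ell-i-1}\}$; exponent $E(g)=\frac1\ell\sum_{i=0}^{\ell-1}\log_\ell D_{min}^{(i)}$. *)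

From HB Require Import structures.
From Stdlib Require Import Reals.
From mathcomp Require Import all_boot.
Set Implicit Arguments. Unset Strict Implicit. Unset Printing Implicit Defensive.

Notation word l := (l.-tuple bool).

Definition dH (l : nat) (x y : word l) : nat :=
  \sum_(j < l) (tnth x j != tnth y j).

Definition split_at (l i : nat) (x : word l) (w : seq bool) (b : bool)
    (u : seq bool) : bool :=
  (size w == i) && ((x : seq bool) == w ++ b :: u).

(* The pair (x,y) is of the form (w.0.u, w.1.v) with |w| = i.
   (w, u, v are determined by x, y: w = take i x, u = drop i.+1 x, ...) *)
Definition partial_pair (l i : nat) (x y : word l) : bool :=
  split_at i x (take i x) false (drop i.+1 x) &&
  split_at i y (take i x) true (drop i.+1 y).

(* D_min^(i) of g : minimum over such pairs; the default value l is never
   used for i < l since the set of pairs is then nonempty. *)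
Definition Dmin (l : nat) (g : word l -> word l) (i : nat) : nat :=
  \big[minn/l]_(p : word l * word l | partial_pair i p.1 p.2) dH (g p.1) (g p.2).

Definition logb (b x : R) : R := Rdiv (ln x) (ln b).

Definition exponent (l : nat) (g : word l -> word l) : R :=
  Rmult (Rinv (INR l)) (\big[Rplus/R0]_(i < l) logb (INR l) (INR (Dmin g i))).

Definition kernel (l : nat) (g : word l -> word l) : Prop := bijective g.

(* Code decomposition of {0,1}^l with chain of parameters
   (l,k_0,d_0)-...-(l,k_{m-1},d_{m-1}); P j is the set of level-j sets. *)
Definition code_decomposition (l m : nat) (k d : nat -> nat)
    (P : nat -> {set {set word l}}) : Prop :=
  [/\ k 0 = l,
      (forall j, j.+1 < m -> k j.+1 < k j),
      P 0 = [set [set: word l]],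
      (forall j, 0 < j < m ->
         (forall A, A \in P j.-1 -> partition [set B in P j | B \subset A] A) /\
         (forall B, B \in P j -> exists2 A, A \in P j.-1 & B \subset A)) &
      (forall j, j < m -> forall B, B \in P j ->
         #|B| = 2 ^ k j /\
         (forall x y, x \in B -> y \in B -> x != y -> d j <= dH x y))].

(** The kernel reads its input word from the front, block by block: the
   first [k_0 - k_1] bits choose one of the [2^(k_0 - k_1)] level-1 sets,
   the next [k_1 - k_2] bits choose a level-2 set inside it, and so on.
   Two inputs agreeing on their first [i] bits, with
   [l - k_j <= i < l - k_(j+1)], therefore land in the same level-[j] set,
   so their images are at distance at least [d_j]; hence
   [D_min^(i) >= d_j] for the [k_j - k_(j+1)] indices [i] of block [j]. *)
From HB Require Import structures.
From Stdlib Require Import Reals Lra.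
From mathcomp Require Import all_boot zify.
Set Implicit Arguments. Unset Strict Implicit.

Fixpoint binrank (s : seq bool) : nat :=
  if s is b :: s' then b + 2 * binrank s' else 0.

Lemma binrank_lt s : binrank s < 2 ^ size s.
Proof. by elim: s => [|b s IH] //=; rewrite expnS; case: b => /=; lia. Qed.

Lemma binrank_inj s t : size s = size t -> binrank s = binrank t -> s = t.
Proof.
elim: s t => [|b s IH] [|c t] //= [eq_st] eq_rk.
have <- : b = c by case: b c eq_rk => [] [] /=; lia.
by congr (_ :: _); apply: IH => //; case: b eq_rk => /=; lia.
Qed.

Definition pick_bits (T : finType) (A : {set T}) (x0 : T) (s : seq bool) : T :=
  nth x0 (enum A) (binrank s).

Lemma pick_bits_in (T : finType) (A : {set T}) x0 s :
  2 ^ size s <= #|A| -> pick_bits A x0 s \in A.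
Proof.
move=> leA; rewrite /pick_bits -mem_enum; apply: mem_nth.
by rewrite -cardE; exact: leq_trans (binrank_lt s) leA.
Qed.

Lemma pick_bits_inj (T : finType) (A : {set T}) x0 s t :
  size s = size t -> 2 ^ size s <= #|A| ->
  pick_bits A x0 s = pick_bits A x0 t -> s = t.
Proof.
move=> eq_st leA /eqP; rewrite /pick_bits nth_uniq ?enum_uniq -?cardE.
- by move/eqP; apply: binrank_inj.
- exact: leq_trans (binrank_lt s) leA.
- by rewrite eq_st in leA; exact: leq_trans (binrank_lt t) leA.
- by [].
Qed.

Section HierarchicalEncoding.

Variables (l m : nat) (k d : nat -> nat) (P : nat -> {set {set word l}}).
Hypothesis decP : code_decomposition m k d P.

Lemma level_dim_nonincr i j : i <= j < m -> k j <= k i.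
Proof.
case: decP => _ k_decr _ _ _ /andP[le_ij lt_jm].
elim: j le_ij lt_jm => [|j IH] le_ij lt_jm; first by have -> : i = 0 by lia.
case: (ltngtP i j.+1) => [lt_ij||->] //; last by lia.
by have := k_decr j lt_jm; have := IH ltac:(lia) ltac:(lia); lia.
Qed.

Definition children j (A : {set word l}) : {set {set word l}} :=
  [set B in P j.+1 | B \subset A].

Lemma children_partition j A :
  j.+1 < m -> A \in P j -> partition (children j A) A.
Proof.
case: decP => _ _ _ part _ lt_jm.
by have [part_j _] := part j.+1 ltac:(lia); exact: part_j.
Qed.

Lemma card_children j A :
  j.+1 < m -> A \in P j -> #|children j A| = 2 ^ (k j - k j.+1).
Proof.
case: decP => _ k_decr _ _ size_dist lt_jm PA.
have [cardA _] := size_dist j ltac:(lia) A PA.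
have := card_partition (children_partition lt_jm PA).
rewrite cardA (eq_bigr (fun _ => 2 ^ k j.+1)); last first.
  by move=> B; rewrite inE => /andP[PB _]; have [] := size_dist j.+1 lt_jm B PB.
rewrite sum_nat_const.
have -> : k j = (k j - k j.+1) + k j.+1 by have := k_decr j lt_jm; lia.
by rewrite expnD addnK => /eqP; rewrite eqn_pmul2r ?expn_gt0 // => /eqP.
Qed.

Definition encodes j (A : {set word l}) (f : seq bool -> word l) : Prop :=
  [/\ forall s, size s = k j -> f s \in A,
      {in [pred s | size s == k j] &, injective f} &
      forall j', j <= j' < m -> forall s t, size s = k j -> size t = k j ->
        take (k j - k j') s = take (k j - k j') t ->
        exists2 B, B \in P j' & (f s \in B) && (f t \in B)].

Lemma encodes_last j A :
  j.+1 = m -> A \in P j -> encodes j A (pick_bits A (nseq_tuple l false)).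
Proof.
case: decP => _ _ _ _ size_dist last_j PA.
have [cardA _] := size_dist j ltac:(lia) A PA.
split.
- by move=> s sz_s; apply: pick_bits_in; rewrite sz_s cardA.
- move=> s t /eqP sz_s /eqP sz_t.
  by apply: pick_bits_inj; rewrite ?sz_s ?sz_t ?cardA.
- move=> j' range_j' s t sz_s sz_t _; have -> : j' = j by lia.
  by exists A; rewrite // !pick_bits_in ?sz_s ?sz_t ?cardA.
Qed.

Section Step.

Variables (j : nat) (A : {set word l}) (F : {set word l} -> seq bool -> word l).
Hypotheses (lt_jm : j.+1 < m) (PA : A \in P j)
  (encF : forall B, B \in P j.+1 -> encodes j.+1 B (F B)).

Let a := k j - k j.+1.
Let child (s : seq bool) := pick_bits (children j A) set0 (take a s).
Let f (s : seq bool) := F (child s) (drop a s).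

Let k_split : k j = a + k j.+1.
Proof. by case: decP => _ k_decr _ _ _; have := k_decr j lt_jm; rewrite /a; lia. Qed.

Let size_take_a (s : seq bool) : size s = k j -> size (take a s) = a.
Proof. by move=> sz_s; rewrite size_takel // sz_s k_split leq_addr. Qed.

Let size_drop_a (s : seq bool) : size s = k j -> size (drop a s) = k j.+1.
Proof. by move=> sz_s; rewrite size_drop sz_s k_split addKn. Qed.

Let child_in (s : seq bool) : size s = k j -> child s \in children j A.
Proof.
by move=> sz_s; apply: pick_bits_in; rewrite size_take_a // card_children.
Qed.

Let child_P (s : seq bool) : size s = k j -> child s \in P j.+1.
Proof. by move/child_in; rewrite inE => /andP[]. Qed.

Let step_mem (s : seq bool) : size s = k j -> f s \in A.
Proof.
move=> sz_s; have := child_in sz_s; rewrite inE => /andP[_ /subsetP]; apply.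
by have [memF _ _] := encF (child_P sz_s); apply: memF; rewrite size_drop_a.
Qed.

Let child_inj (s t : seq bool) : size s = k j -> size t = k j -> f s = f t -> child s = child t.
Proof.
move=> sz_s sz_t eq_f; apply/eqP/negPn/negP => neq_child.
have [_ /trivIsetP triv _] := and3P (children_partition lt_jm PA).
have disj := triv _ _ (child_in sz_s) (child_in sz_t) neq_child.
have [memFs _ _] := encF (child_P sz_s); have [memFt _ _] := encF (child_P sz_t).
have := memFt _ (size_drop_a sz_t).
by rewrite -/(f t) -eq_f (disjointFr disj) // memFs // size_drop_a.
Qed.

Lemma encodes_step : encodes j A f.
Proof.
split; first exact: step_mem.
- move=> s t /eqP sz_s /eqP sz_t eq_f.
  have eq_child := child_inj sz_s sz_t eq_f.
  have eq_take : take a s = take a t.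
    apply: pick_bits_inj eq_child; rewrite ?size_take_a //.
    by rewrite card_children.
  rewrite -(cat_take_drop a s) -(cat_take_drop a t) eq_take; congr (_ ++ _).
  have [_ injF _] := encF (child_P sz_s).
  by apply: injF; rewrite ?inE ?size_drop_a //; rewrite /f eq_child in eq_f *.
- move=> j' /andP[le_jj' lt_j'm] s t sz_s sz_t eq_pre.
  case: (ltngtP j j') le_jj' => // [lt_jj'|<-] _; last first.
    by exists A => //; rewrite !step_mem.
  have le_k : k j' <= k j.+1 by apply: level_dim_nonincr; lia.
  have eq_take : take a s = take a t.
    have le_a : a <= k j - k j' by rewrite /a; lia.
    by rewrite -(take_takel s le_a) eq_pre take_takel.
  have eq_child : child s = child t by rewrite /child eq_take.
  have [_ _ preF] := encF (child_P sz_s).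
  rewrite /f -eq_child; apply: preF; rewrite ?size_drop_a //; first lia.
  rewrite !take_drop.
  have -> : k j.+1 - k j' + a = k j - k j' by rewrite /a; lia.
  by rewrite eq_pre.
Qed.

End Step.

Lemma encodes_exists j :
  j < m -> exists F, forall A, A \in P j -> encodes j A (F A).
Proof.
move=> lt_jm; have [n] : exists n, j + n = m.-1 by exists (m.-1 - j); lia.
elim: n j lt_jm => [|n IH] j lt_jm eq_n.
  exists (fun A => pick_bits A (nseq_tuple l false)) => A.
  by apply: encodes_last; lia.
have [F encF] := IH j.+1 ltac:(lia) ltac:(lia).
exists (fun A s => F (pick_bits (children j A) set0 (take (k j - k j.+1) s))
                     (drop (k j - k j.+1) s)) => A PA.
by apply: encodes_step => //; lia.
Qed.

Lemma prefix_kernel_exists : 0 < m ->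
  exists g : word l -> word l, injective g /\
    forall j, j < m -> forall x y : word l, take (l - k j) x = take (l - k j) y ->
      exists2 B, B \in P j & (g x \in B) && (g y \in B).
Proof.
case: decP => k0 _ P0 _ _ m_gt0.
have [F encF] := encodes_exists m_gt0.
have [memF injF preF] : encodes 0 [set: word l] (F [set: word l]).
  by apply: encF; rewrite P0 set11.
exists (fun x => F [set: word l] x); split.
  by move=> x y /injF eq_xy; apply: val_inj; apply: eq_xy; rewrite inE size_tuple k0.
move=> j lt_jm x y eq_pre; apply: preF; rewrite ?size_tuple ?k0 //; lia.
Qed.

Lemma dist_le_len j : j < m -> 0 < k j -> d j <= l.
Proof.
case: decP => _ _ _ _ size_dist lt_jm kj_gt0.
have [B PB] : exists B, B \in P j.
  have [g [_ pre]] := prefix_kernel_exists (leq_ltn_trans (leq0n j) lt_jm).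
  set x := nseq_tuple l false.
  by have [B PB _] := pre j lt_jm x x erefl; exists B.
have [cardB distB] := size_dist j lt_jm B PB.
have : 1 < #|B| by rewrite cardB -{1}(expn0 2) ltn_exp2l.
case/card_gt1P => u [v [Bu Bv neq_uv]].
apply: leq_trans (distB u v Bu Bv neq_uv) _.
rewrite -[X in _ <= X]card_ord -sum1_card.
by apply: leq_sum => i _; exact: leq_b1.
Qed.

End HierarchicalEncoding.

Lemma partial_pair_take l i (x y : word l) :
  partial_pair i x y -> take i x = take i y.
Proof. by case/andP => /andP[/eqP sz _] /andP[_ /eqP ->]; rewrite take_size_cat. Qed.

Lemma partial_pair_neq l i (x y : word l) : partial_pair i x y -> x != y.
Proof.
case/andP => /andP[/eqP sz /eqP ex] /andP[_ /eqP ey]; apply/eqP => eq_xy.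
subst y.
have := congr1 (fun s => nth false s i) (etrans (esym ex) ey).
by rewrite /= !nth_cat sz ltnn subnn.
Qed.

Lemma Dmin_ge l (g : word l -> word l) i n :
  n <= l -> (forall x y, partial_pair i x y -> n <= dH (g x) (g y)) ->
  n <= Dmin g i.
Proof.
move=> le_nl ge_n; rewrite /Dmin.
apply: (big_ind (fun x => n <= x)) => // [a b na nb|[x y] /= /ge_n //].
by rewrite leq_min na nb.
Qed.

HB.instance Definition _ := Monoid.isComLaw.Build R R0 Rplus
  (fun a b c => esym (Rplus_assoc a b c)) Rplus_comm Rplus_0_l.

Lemma Rsum_nat_ge_const (F : nat -> R) (c : R) a n :
  (forall i, a <= i < a + n -> Rle c (F i)) ->
  Rle (Rmult (INR n) c) (\big[Rplus/R0]_(a <= i < a + n) F i).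
Proof.
elim: n => [|n IH] ge_c; first by rewrite addn0 big_geq //=; lra.
rewrite addnS big_nat_recr ?leq_addr // S_INR Rmult_plus_distr_r Rmult_1_l.
apply: Rplus_le_compat; first by apply: IH => i range_i; apply: ge_c; lia.
by apply: ge_c; lia.
Qed.

Lemma Rsum_blocks_le (l m : nat) (k : nat -> nat) (c f : nat -> R) :
  k 0 = l -> k m = 0 -> (forall j, j < m -> k j.+1 <= k j) ->
  (forall j i, j < m -> l - k j <= i < l - k j.+1 -> Rle (c j) (f i)) ->
  Rle (\big[Rplus/R0]_(j < m) Rmult (INR (k j - k j.+1)) (c j))
      (\big[Rplus/R0]_(i < l) f i).
Proof.
move=> k0 km k_decr ge_c.
have k_le : forall j, j <= m -> k j <= l.
  by elim=> [|j IH] lt_jm; rewrite ?k0 //; have := k_decr j lt_jm; have := IH (ltnW lt_jm); lia.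
suff partial : forall j, j <= m ->
    Rle (\big[Rplus/R0]_(0 <= j' < j) Rmult (INR (k j' - k j'.+1)) (c j'))
        (\big[Rplus/R0]_(0 <= i < l - k j) f i).
  by have := partial m (leqnn m); rewrite km subn0 !big_mkord.
elim=> [|j IH] le_jm; first by rewrite !big_geq ?k0 ?subnn //; right.
have kj_decr := k_decr j le_jm; have kj_le := k_le j (ltnW le_jm).
rewrite big_nat_recr // [X in Rle _ X](big_cat_nat (n := l - k j)) //; last lia.
apply: Rplus_le_compat; first exact: IH (ltnW le_jm).
have -> : l - k j.+1 = (l - k j) + (k j - k j.+1) by lia.
apply: Rsum_nat_ge_const => i range_i; apply: ge_c => //; lia.
Qed.

Lemma logb_le (b x y : nat) : 1 < b -> 0 < x -> x <= y ->
  Rle (logb (INR b) (INR x)) (logb (INR b) (INR y)).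
Proof.
move=> b_gt1 x_gt0 le_xy; rewrite /logb /Rdiv.
have ln_b_gt0 : Rlt 0 (ln (INR b)).
  rewrite -ln_1; apply: ln_increasing; first lra.
  by have := lt_INR 1 b ltac:(apply/ltP; exact b_gt1); rewrite /=; lra.
apply: Rmult_le_compat_r; first by left; apply: Rinv_0_lt_compat.
have x_pos := lt_0_INR x ltac:(apply/ltP; exact x_gt0).
case: (le_INR x y ltac:(apply/leP; exact le_xy)) => [lt_xy|->]; last by right.
by left; apply: ln_increasing.
Qed.

Theorem corollary1 (l m : nat) (k d : nat -> nat)
    (P : nat -> {set {set word l}}) :
  (2 <= l)%N -> (0 < m)%N -> k m = 0%N ->
  (forall j, (j < m)%N -> (0 < d j)%N) ->
  code_decomposition m k d P ->
  exists g : word l -> word l, kernel g /\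
    Rge (exponent g)
      (Rmult (Rinv (INR l))
        (\big[Rplus/R0]_(j < m) Rmult (INR (k j - k j.+1)) (logb (INR l) (INR (d j))))).
Proof.
move=> l_ge2 m_gt0 km d_gt0 decP.
have [g [g_inj g_pre]] := prefix_kernel_exists decP m_gt0.
have [k0 k_decr _ _ size_dist] := decP.
have k_nonincr j : j < m -> k j.+1 <= k j.
  by move=> lt_jm; case: (ltngtP j.+1 m) => [/k_decr/ltnW|//|->]; rewrite ?km; lia.
have Dmin_block j i : j < m -> l - k j <= i < l - k j.+1 -> d j <= Dmin g i.
  move=> lt_jm /andP[le_i lt_i]; have kj_gt0 : 0 < k j by lia.
  apply: Dmin_ge (dist_le_len decP lt_jm kj_gt0) _ => x y pair_xy.
  have [B PB /andP[Bgx Bgy]] : exists2 B, B \in P j & (g x \in B) && (g y \in B).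
    apply: g_pre => //; have := partial_pair_take pair_xy.
    by rewrite -(take_takel x le_i) -(take_takel y le_i) => ->.
  have [_ distB] := size_dist j lt_jm B PB.
  by apply: distB => //; rewrite (inj_eq g_inj); exact: partial_pair_neq pair_xy.
exists g; split; first exact: injF_bij.
apply: Rle_ge; apply: Rmult_le_compat_l.
  by left; apply: Rinv_0_lt_compat; apply: lt_0_INR; apply/ltP; lia.
apply: (Rsum_blocks_le (c := fun j => logb (INR l) (INR (d j)))
                       (f := fun i => logb (INR l) (INR (Dmin g i)))) => // j i lt_jm range_i.
by apply: logb_le; [lia | exact: d_gt0 | exact: Dmin_block].
Qed.
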